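(* Let $\Omega\subseteq\mathcal{A}_n$ be a closed set which is uniformly transversally star-shaped with respect to $S\in\mathcal{A}_n$. Then for every compact set $K\subseteq\mathcal{A}_n$, $\sup\langle n,S-R\rangle<0,$ where the supremum is taken over all $R\in K\cap\partial\Omega$ and all $n\in\mathcal{A}_n$ with $\|n\|=1$ and $\langle n,v\rangle\le0$ for all $v\in T_R\Omega$.
   Context: $\mathcal{A}_n$ is the (finite-dimensional Euclidean) space of algebraic curvature tensors on $\mathbb{R}^n$, with scalar product $\langle R,S\rangle=\mathrm{tr}(R\circ S)$. Tangent cone: $T_R\Omega:=\overline{\{\dot\gamma(0)\mid\gamma:(-\epsilon,\epsilon)\to\mathcal{A}_n\ \mathcal C^1,\ \gamma(0)=R,\ \gamma(t)\in\Omega\ \forall t\in[0,\epsilon)\}}$. A closed $\Omega$ is uniformly transversally star-shaped with respect to $S$ if for every compact $K\subseteq\mathcal{A}_n$ there is $r>0$ such that for every $R\in K\cap\partial\Omega$ there is $\varepsilon_0>0$ with $R+\varepsilon B_r(S-R)\subseteq\Omega$ for all $\varepsilon\in[0,\varepsilon_0)$, $B_r(v)$ the open ball of radius $r$ around $v$. *)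

From HB Require Import structures.
From mathcomp Require Import all_boot all_order all_algebra.
From mathcomp Require Import all_classical all_reals all_analysis.
Set Implicit Arguments. Unset Strict Implicit. Unset Printing Implicit Defensive.
Import Order.TTheory GRing.Theory Num.Theory.
Import numFieldNormedType.Exports.
Local Open Scope classical_set_scope.
Local Open Scope ring_scope.

(* Ambient space: 4-tensors on R^n, stored as (n*n) x (n*n) matrices,
   entry T_{ijkl} := T (mxvec_index i j) (mxvec_index k l). *)
Definition tens (K : realType) (n : nat) := 'M[K]_(n * n, n * n).

Definition tc {K : realType} {n : nat} (T : tens K n) (i j k l : 'I_n) : K :=
  T (mxvec_index i j) (mxvec_index k l).

Definition ACT (K : realType) (n : nat) : set (tens K n) :=
  [set T | forall i j k l : 'I_n,
     [/\ tc T i j k l = - tc T j i k l,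
         tc T i j k l = - tc T i j l k,
         tc T i j k l = tc T k l i j &
         tc T i j k l + tc T j k i l + tc T k i j l = 0]].
Arguments ACT K n : clear implicits.

(* <R,S> = tr(R o S), R,S viewed as operators on Lambda^2 R^n
   (orthonormal basis e_i /\ e_j, i<j): equals 1/4 sum_{ijkl} R_ijkl S_ijkl. *)
Definition ip {K : realType} {n : nat} (T U : tens K n) : K :=
  4^-1 * \sum_(i < n) \sum_(j < n) \sum_(k < n) \sum_(l < n) tc T i j k l * tc U i j k l.

Definition nrm {K : realType} {n : nat} (T : tens K n) : K := Num.sqrt (ip T T).

Definition rbd {K : realType} {n : nat} (Om : set (tens K n)) : set (tens K n) :=
  [set R | ACT K n R /\ closure Om R /\
     forall e : K, 0 < e -> exists X, [/\ ACT K n X, nrm (X - R) < e & ~ Om X]].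

Definition curve_velocities {K : realType} {n : nat} (Om : set (tens K n)) (R : tens K n)
  : set (tens K n) :=
  [set v | exists (g : K -> tens K n) (eps : K), [/\ 0 < eps /\ g 0 = R, v = 'D_1 g 0,
      (forall t, (- eps < t < eps) -> ACT K n (g t)),
      (forall t, (0 <= t < eps) -> Om (g t)) &
      (forall t, (- eps < t < eps) -> derivable g t 1 /\ {for t, continuous ('D_1 g)})]].

Definition tcone {K : realType} {n : nat} (Om : set (tens K n)) (R : tens K n) : set (tens K n) :=
  closure (curve_velocities Om R).

Definition aball {K : realType} {n : nat} (r : K) (v : tens K n) : set (tens K n) :=
  [set w | ACT K n w /\ nrm (w - v) < r].

Definition uniformly_transversally_star_shaped {K : realType} {n : nat}
  (Om : set (tens K n)) (S : tens K n) : Prop :=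
  forall Kc : set (tens K n), Kc `<=` ACT K n -> compact Kc ->
  exists r : K, 0 < r /\
    forall R, Kc R -> rbd Om R ->
    exists eps0 : K, 0 < eps0 /\
      forall eps : K, (0 <= eps < eps0) ->
        forall w, aball r (S - R) w -> Om (R + eps *: w).

From HB Require Import structures.
From mathcomp Require Import all_boot all_order all_algebra.
From mathcomp Require Import all_classical all_reals all_analysis.
From mathcomp Require Import ring lra.
Import Order.TTheory GRing.Theory Num.Theory.
Import numFieldNormedType.Exports.
Local Open Scope classical_set_scope.
Local Open Scope ring_scope.

(* Uniform transversal star-shapedness gives, on a compact set, a uniform radius
   r such that every direction w within r of S - R keeps the ray R + t w inside
   Om for small t >= 0; such a w is the velocity of that ray, hence tangent.  If
   N is a unit outer normal at R, the choice w = (S - R) + (r/2) N gives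
   0 >= <N, w> = <N, S - R> + r/2. *)

Lemma is_derive_ray {K : realType} {V : normedModType K} (R w : V) (t : K) :
  is_derive t 1 (fun s : K => R + s *: w) w.
Proof.
have df : is_diff t (cst R + ( *:%R ^~ w) : K -> V) (0 + ( *:%R ^~ w)).
  exact: is_diffD.
have dray : differentiable (fun s : K => R + s *: w) t := ex_diff.
apply: DeriveDef; first exact: diff_derivable.
by rewrite deriveE // diff_val /= add0r scale1r.
Qed.

Section CurvatureTensors.
Set Implicit Arguments.
Unset Strict Implicit.
Variables (K : realType) (n : nat).
Implicit Types (T U V R S w : tens K n) (Om : set (tens K n)).

Lemma ACT_add U V : ACT K n U -> ACT K n V -> ACT K n (U + V).
Proof.
move=> hU hV i j k l.
have [] := hU i j k l; have [] := hV i j k l.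
rewrite /tc !mxE => *; split; lra.
Qed.

Lemma ACT_scale (a : K) U : ACT K n U -> ACT K n (a *: U).
Proof.
move=> hU i j k l.
have [h1 h2 h3 h4] := hU i j k l.
move: h1 h2 h3 h4; rewrite /tc !mxE => h1 h2 h3 h4.
split; [by rewrite h1 mulrN | by rewrite h2 mulrN | by rewrite h3 |].
by rewrite -!mulrDr h4 mulr0.
Qed.

Lemma ACT_sub U V : ACT K n U -> ACT K n V -> ACT K n (U - V).
Proof. by move=> hU hV; rewrite -scaleN1r; apply/ACT_add/ACT_scale. Qed.

Lemma ipPr (a : K) T U V : ip T (a *: U + V) = a * ip T U + ip T V.
Proof.
rewrite /ip mulrCA -mulrDr; congr (_ * _).
rewrite big_distrr -big_split; apply: eq_bigr => i _.
rewrite big_distrr -big_split; apply: eq_bigr => j _.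
rewrite big_distrr -big_split; apply: eq_bigr => k _.
rewrite big_distrr -big_split; apply: eq_bigr => l _.
rewrite /tc !mxE /=; ring.
Qed.

Lemma ip_self_ge0 T : 0 <= ip T T.
Proof.
apply: mulr_ge0; first by rewrite invr_ge0.
by do 4 (apply: sumr_ge0 => ? _); exact: sqr_ge0.
Qed.

Lemma ip_self_nrm T : ip T T = nrm T ^+ 2.
Proof. by rewrite sqr_sqrtr // ip_self_ge0. Qed.

Lemma nrmZ (a : K) T : nrm (a *: T) = `|a| * nrm T.
Proof.
have ipZZ : ip (a *: T) (a *: T) = a ^+ 2 * ip T T.
  rewrite /ip mulrCA; congr (_ * _); rewrite big_distrr.
  do 3 (apply: eq_bigr => ? _; rewrite big_distrr).
  by apply: eq_bigr => ? _; rewrite /tc !mxE /=; ring.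
by rewrite /nrm ipZZ sqrtrM ?sqr_ge0 // sqrtr_sqr.
Qed.

Lemma ray_in_tcone Om R w (eps : K) : 0 < eps -> ACT K n R -> ACT K n w ->
  (forall t, 0 <= t < eps -> Om (R + t *: w)) -> tcone Om R w.
Proof.
move=> eps_gt0 AR Aw ray_in; apply: subset_closure.
have ray_D (t : K) : is_derive t 1 (fun s => R + s *: w) w := is_derive_ray R w t.
exists (fun s => R + s *: w), eps; split.
- by rewrite scale0r addr0.
- by rewrite derive_val.
- by move=> t _; apply/ACT_add/ACT_scale.
- exact: ray_in.
- move=> t _; split; first exact: ex_derive.
  have -> : 'D_1 (fun s : K => R + s *: w) = cst w.
    by apply/funext => s; rewrite derive_val.
  exact: cst_continuous.
Qed.

Lemma ust_aball_sub_tcone Om S (Kc : set (tens K n)) :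
  uniformly_transversally_star_shaped Om S -> Kc `<=` ACT K n -> compact Kc ->
  exists r : K, 0 < r /\
    forall R, Kc R -> rbd Om R -> aball r (S - R) `<=` tcone Om R.
Proof.
move=> ust KcA cKc; have [r [r_gt0 star]] := ust Kc KcA cKc.
exists r; split => // R KcR bdR w w_ball.
have [eps [eps_gt0 ray_in]] := star R KcR bdR.
by apply: (ray_in_tcone eps_gt0 bdR.1 w_ball.1) => t /ray_in; apply.
Qed.

End CurvatureTensors.

Theorem lemma4p7 (K : realType) (n : nat) (Om : set (tens K n)) (S : tens K n) :
  Om `<=` ACT K n -> closed Om -> ACT K n S ->
  uniformly_transversally_star_shaped Om S ->
  forall Kc : set (tens K n), Kc `<=` ACT K n -> compact Kc ->
  exists c : K, 0 < c /\
    forall R N : tens K n, Kc R -> rbd Om R ->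
      ACT K n N -> nrm N = 1 ->
      (forall v, tcone Om R v -> ip N v <= 0) ->
      ip N (S - R) <= - c.
Proof.
move=> _ _ AS ust Kc KcA cKc.
have [r [r_gt0 tangent]] := ust_aball_sub_tcone ust KcA cKc.
exists (r / 2); split; first by rewrite divr_gt0.
move=> R N KcR bdR AN N1 normal.
set w := (r / 2) *: N + (S - R).
have w_ball : aball r (S - R) w.
  split; first by apply/ACT_add/ACT_sub => //; [exact: ACT_scale | exact: bdR.1].
  by rewrite addrK nrmZ N1 mulr1 gtr0_norm ?divr_gt0 //; lra.
have := normal w (tangent R KcR bdR w w_ball).
by rewrite ipPr ip_self_nrm N1 expr1n mulr1; lra.
Qed.
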